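(* Let $U:\mathbb{R}^d\to\mathbb{R}$ satisfy: (A1) $U$ is continuously differentiable and $\|\nabla U(x)-\nabla U(y)\|_2\le L\|x-y\|_2$ for all $x,y$, for some $L>0$; (A3) there exist $m,R>0$ such that for all $x,y\in\mathbb{R}^d$ with $\|x-y\|_2>R$, $\langle\nabla U(x)-\nabla U(y),x-y\rangle\ge m\|x-y\|_2^2$. Let $\kappa=L/m$ and $c=1000$. Let $x,y,w\in\mathbb{R}^d$, $z=x-y$, and $\nabla=\nabla U(x)-\nabla U(y)$. If $\|z\|_2^2+\|z+w\|_2^2\ge2.2R^2$, then $$\left\langle\begin{pmatrix}z\\ z+w\end{pmatrix},\begin{pmatrix}w\\ -w-\frac1{c\kappa L}\nabla\end{pmatrix}\right\rangle\le-\frac1{3(c\kappa)^2}\big(\|z\|_2^2+\|z+w\|_2^2\big).$$ *)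

From HB Require Import structures.
From mathcomp Require Import all_boot all_order all_algebra.
From mathcomp Require Import all_classical all_reals all_analysis.
Set Implicit Arguments. Unset Strict Implicit. Unset Printing Implicit Defensive.
Import Order.TTheory GRing.Theory Num.Theory.
Local Open Scope ring_scope.

Definition dotv (R : ringType) (d : nat) (u v : 'rV[R]_d) : R :=
  \sum_(i < d) u 0 i * v 0 i.

Definition norm2 (R : rcfType) (d : nat) (u : 'rV[R]_d) : R :=
  Num.sqrt (dotv u u).

(* Expanding the inner product, the left-hand side is
   -|w|^2 - eta <z + w, g> with eta = 1/(c kappa L) = rho/(c L), rho = m/L.
   Since |z|^2 + |z + w|^2 >= 2.2 R^2, one of z, z + w is longer than R, and
   (A3) together with the Lipschitz bound along that vector gives rho <= 1.
   If |z| > R, (A3) yields eta <z, g> >= rho^2 |z|^2 / c and Lipschitz yields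
   |eta <w, g>| <= rho |z| |w| / c; the resulting quadratic form in
   (rho |z|, |w|) is below -rho^2 (|z|^2 + |z + w|^2) / (3 c^2).
   If |z| <= R, then |z + w| >= 1.09 R, so |w| >= |z + w| - R >= 0.09 R, and
   -|w|^2 absorbs |eta <z + w, g>| <= rho |z + w| R / c. *)

From HB Require Import structures.
From mathcomp Require Import all_boot all_order all_algebra.
From mathcomp Require Import all_classical all_reals all_analysis.
From mathcomp Require Import ring lra.
Set Implicit Arguments.
Unset Strict Implicit.
Unset Printing Implicit Defensive.

Import Order.TTheory GRing.Theory Num.Theory numFieldNormedType.Exports.
Local Open Scope ring_scope.
Local Open Scope classical_set_scope.

Section DotvRing.
Variables (R : nzRingType) (d : nat).
Implicit Types u v w : 'rV[R]_d.

Lemma dotvDl u v w : dotv (u + v) w = dotv u w + dotv v w.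
Proof. by rewrite /dotv -big_split; apply: eq_bigr => i _; rewrite !mxE mulrDl. Qed.

Lemma dotvDr u v w : dotv u (v + w) = dotv u v + dotv u w.
Proof. by rewrite /dotv -big_split; apply: eq_bigr => i _; rewrite !mxE mulrDr. Qed.

Lemma dotvNr u v : dotv u (- v) = - dotv u v.
Proof. by rewrite /dotv -sumrN; apply: eq_bigr => i _; rewrite !mxE mulrN. Qed.

Lemma dotvZl k u v : dotv (k *: u) v = k * dotv u v.
Proof. by rewrite /dotv mulr_sumr; apply: eq_bigr => i _; rewrite !mxE mulrA. Qed.

Lemma dotv0r u : dotv u 0 = 0.
Proof. by rewrite /dotv big1 // => i _; rewrite mxE mulr0. Qed.

End DotvRing.

Section DotvComRing.
Variables (R : comNzRingType) (d : nat).
Implicit Types u v : 'rV[R]_d.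

Lemma dotvC u v : dotv u v = dotv v u.
Proof. by apply: eq_bigr => i _; rewrite mulrC. Qed.

Lemma dotvZr k u v : dotv u (k *: v) = k * dotv u v.
Proof. by rewrite dotvC dotvZl dotvC. Qed.

End DotvComRing.

Section DotvReal.
Variables (R : realDomainType) (d : nat).
Implicit Types u v : 'rV[R]_d.

Lemma dotv_ge0 u : 0 <= dotv u u.
Proof. by apply: sumr_ge0 => i _; rewrite -expr2 sqr_ge0. Qed.

Lemma dotv_eq0 u : (dotv u u == 0) = (u == 0).
Proof.
apply/idP/eqP => [|->]; last by rewrite dotv0r.
rewrite psumr_eq0 => [/allP u0|i _]; last by rewrite -expr2 sqr_ge0.
apply/rowP => i; rewrite mxE; apply/eqP.
by have /implyP/(_ isT) := u0 i (mem_index_enum _); rewrite mulf_eq0 orbb.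
Qed.

Lemma dotv_sqr_le u v : dotv u v ^+ 2 <= dotv u u * dotv v v.
Proof.
have [->|v_neq0] := eqVneq v 0; first by rewrite !dotv0r expr0n mulr0.
have v_gt0 : 0 < dotv v v by rewrite lt_def dotv_eq0 v_neq0 dotv_ge0.
(* 0 <= |(v.v) u - (u.v) v|^2 = (v.v) ((u.u) (v.v) - (u.v)^2) *)
have := dotv_ge0 (dotv v v *: u - dotv u v *: v).
rewrite dotvDl !dotvDr -!scaleNr !dotvZl !dotvZr (dotvC v u) => expand_ge0.
have : 0 <= dotv v v * (dotv u u * dotv v v - dotv u v ^+ 2) by nra.
by rewrite pmulr_rge0 // subr_ge0.
Qed.

End DotvReal.

Section Norm2.
Variables (R : rcfType) (d : nat).
Implicit Types u v : 'rV[R]_d.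

Lemma norm2_ge0 u : 0 <= norm2 u.
Proof. exact: sqrtr_ge0. Qed.

Lemma norm2_sqr u : norm2 u ^+ 2 = dotv u u.
Proof. by rewrite sqr_sqrtr // dotv_ge0. Qed.

Lemma norm_dotv_le u v : `|dotv u v| <= norm2 u * norm2 v.
Proof.
rewrite -sqrtr_sqr /norm2 -sqrtrM ?dotv_ge0 //.
by rewrite ler_sqrt ?dotv_sqr_le // mulr_ge0 // dotv_ge0.
Qed.

Lemma ler_norm2D u v : norm2 (u + v) <= norm2 u + norm2 v.
Proof.
rewrite -(ler_pXn2r (n:=2)) ?nnegrE ?addr_ge0 ?norm2_ge0 //.
rewrite norm2_sqr dotvDl !dotvDr (dotvC v u) sqrrD !norm2_sqr.
have := norm_dotv_le u v; have := ler_norm (dotv u v); nra.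
Qed.

End Norm2.

Lemma le_monotone_lipschitz (R : rcfType) (d : nat) (m L : R) (v g : 'rV[R]_d) :
  m * norm2 v ^+ 2 <= dotv g v -> norm2 g <= L * norm2 v -> 0 < norm2 v ->
  m <= L.
Proof.
move=> monotone lipschitz v_gt0.
have gv_le : dotv g v <= L * norm2 v ^+ 2.
  apply: le_trans (ler_norm _) _; apply: le_trans (norm_dotv_le g v) _.
  by rewrite expr2 mulrA ler_wpM2r ?norm2_ge0.
by rewrite -(ler_pM2r (exprn_gt0 2 v_gt0)) (le_trans monotone).
Qed.

Lemma far_range_estimate (R : realFieldType) (rho a b nu : R) :
  0 < rho <= 1 -> 0 <= a -> 0 <= b -> 0 <= nu <= a + b ->
  - b ^+ 2 - (rho ^+ 2 * a ^+ 2 - rho * a * b) / 1000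
    <= - (rho ^+ 2 / (3 * 1000 ^+ 2)) * (a ^+ 2 + nu ^+ 2).
Proof.
move=> /andP[rho_gt0 rho_le1] a_ge0 b_ge0 /andP[nu_ge0 nu_le].
have rhonu_le : rho * nu <= rho * a + b by nra.
have rhonu_ge0 : 0 <= rho * nu by rewrite mulr_ge0 // ltW.
have rhonu2_le : (rho * nu) ^+ 2 <= (rho * a + b) ^+ 2.
  by rewrite ler_pXn2r // nnegrE (le_trans rhonu_ge0).
have := sqr_ge0 (rho * a - b).
have := sqr_ge0 b; have := sqr_ge0 (rho * a).
nra.
Qed.

Lemma near_range_estimate (R : realFieldType) (rho a b nu r : R) :
  0 < rho <= 1 -> 0 <= a <= r -> 0 <= b -> 0 <= nu <= a + b ->
  22 / 10 * r ^+ 2 <= a ^+ 2 + nu ^+ 2 ->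
  - b ^+ 2 + rho * nu * r / 1000 <= - (rho ^+ 2 / (3 * 1000 ^+ 2)) * (a ^+ 2 + nu ^+ 2).
Proof.
move=> /andP[rho_gt0 rho_le1] /andP[a_ge0 a_le] b_ge0 /andP[nu_ge0 nu_le] large.
have r_ge0 : 0 <= r := le_trans a_ge0 a_le.
have a2_le : a ^+ 2 <= r ^+ 2 by rewrite ler_pXn2r.
(* nu ^+ 2 >= 1.2 r ^+ 2 > (1.09 r) ^+ 2, so b >= nu - a >= 0.09 r *)
have nu_ge : 109 / 100 * r <= nu.
  have [//|nu_lt] := leP (109 / 100 * r) nu; exfalso.
  have : nu ^+ 2 < (109 / 100 * r) ^+ 2 by rewrite ltr_pXn2r // nnegrE; lra.
  nra.
pose t := nu - r.
have t_ge : 9 / 100 * r <= t by rewrite /t; lra.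
have t2_le : t ^+ 2 <= b ^+ 2 by rewrite ler_pXn2r ?nnegrE // /t; lra.
have drift_le : rho * nu * r <= nu * r by rewrite -mulrA ler_piMl ?mulr_ge0 // ltW.
have sum_le : rho ^+ 2 * (a ^+ 2 + nu ^+ 2) <= r ^+ 2 + nu ^+ 2.
  have : rho ^+ 2 * (a ^+ 2 + nu ^+ 2) <= a ^+ 2 + nu ^+ 2.
    by rewrite ler_piMl ?addr_ge0 ?sqr_ge0 // expr_le1 // ltW.
  lra.
have rr_le : 9 / 100 * r * r <= t * r by nra.
have rt_le : 9 / 100 * r * t <= t * t by nra.
have nuE : nu = r + t by rewrite /t; ring.
nra.
Qed.

Section ContractionBounds.
Variables (R : rcfType) (d : nat) (m L : R) (z w g : 'rV[R]_d).
Hypotheses (m_gt0 : 0 < m) (m_le_L : m <= L).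

Let L_gt0 : 0 < L. Proof. exact: lt_le_trans m_le_L. Qed.

Let rho_range : 0 < m / L <= 1.
Proof. by rewrite divr_gt0 // ler_pdivrMr // mul1r m_le_L. Qed.

Let eta_gt0 : 0 < m / L / (1000 * L).
Proof. by apply: divr_gt0; [exact: divr_gt0 | apply: mulr_gt0; rewrite ?ltr0n]. Qed.

Lemma far_range_bound :
  m * norm2 z ^+ 2 <= dotv g z -> norm2 g <= L * norm2 z ->
  - norm2 w ^+ 2 - m / L / (1000 * L) * dotv (z + w) g
    <= - ((m / L) ^+ 2 / (3 * 1000 ^+ 2)) * (norm2 z ^+ 2 + norm2 (z + w) ^+ 2).
Proof.
move=> monotone lipschitz.
have wg_le : - dotv w g <= norm2 w * (L * norm2 z).
  apply: ler_normlW; rewrite normrN.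
  exact: le_trans (norm_dotv_le w g) (ler_wpM2l (norm2_ge0 w) lipschitz).
have drift_ge : ((m / L) ^+ 2 * norm2 z ^+ 2 - m / L * norm2 z * norm2 w) / 1000
    <= m / L / (1000 * L) * dotv (z + w) g.
  have -> : ((m / L) ^+ 2 * norm2 z ^+ 2 - m / L * norm2 z * norm2 w) / 1000
      = m / L / (1000 * L) * (m * norm2 z ^+ 2 - norm2 w * (L * norm2 z)).
    by field; rewrite gt_eqF.
  rewrite ler_wpM2l ?(ltW eta_gt0) // dotvDl (dotvC z); lra.
apply: le_trans (far_range_estimate rho_range (norm2_ge0 z) (norm2_ge0 w) _).
  lra.
by rewrite norm2_ge0 ler_norm2D.
Qed.

Lemma near_range_bound (r : R) :
  norm2 z <= r -> norm2 g <= L * norm2 z ->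
  22 / 10 * r ^+ 2 <= norm2 z ^+ 2 + norm2 (z + w) ^+ 2 ->
  - norm2 w ^+ 2 - m / L / (1000 * L) * dotv (z + w) g
    <= - ((m / L) ^+ 2 / (3 * 1000 ^+ 2)) * (norm2 z ^+ 2 + norm2 (z + w) ^+ 2).
Proof.
move=> z_le lipschitz large.
have g_le : norm2 g <= L * r := le_trans lipschitz (ler_wpM2l (ltW L_gt0) z_le).
have drift_ge : - (m / L * norm2 (z + w) * r / 1000)
    <= m / L / (1000 * L) * dotv (z + w) g.
  have -> : m / L * norm2 (z + w) * r / 1000
      = m / L / (1000 * L) * (norm2 (z + w) * (L * r)).
    by field; rewrite gt_eqF.
  rewrite -mulrN ler_wpM2l ?(ltW eta_gt0) //; apply: lerNnormlW.
  exact: le_trans (norm_dotv_le _ _) (ler_wpM2l (norm2_ge0 _) g_le).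
apply: le_trans (near_range_estimate rho_range _ (norm2_ge0 w) _ large).
- lra.
- by rewrite norm2_ge0 z_le.
- by rewrite norm2_ge0 ler_norm2D.
Qed.

End ContractionBounds.

Theorem lemma16 (R : realType) (d : nat) (U : 'rV[R]_d -> R)
  (gradU : 'rV[R]_d -> 'rV[R]_d) (L m Rr : R) :
  (* (A1): U continuously differentiable with gradient gradU, L-Lipschitz *)
  (forall x, differentiable U x) ->
  (forall x v, 'd U x v = dotv (gradU x) v) ->
  continuous gradU ->
  0 < L ->
  (forall x y, norm2 (gradU x - gradU y) <= L * norm2 (x - y)) ->
  (* (A3) *)
  0 < m -> 0 < Rr ->
  (forall x y, Rr < norm2 (x - y) ->
     m * norm2 (x - y) ^+ 2 <= dotv (gradU x - gradU y) (x - y)) ->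
  forall x y w : 'rV[R]_d,
  let z := x - y in
  let g := gradU x - gradU y in
  let kappa := L / m in
  let c : R := 1000 in
  22 / 10 * Rr ^+ 2 <= norm2 z ^+ 2 + norm2 (z + w) ^+ 2 ->
  dotv z w + dotv (z + w) (- w - (c * kappa * L)^-1 *: g)
    <= - (3 * (c * kappa) ^+ 2)^-1 * (norm2 z ^+ 2 + norm2 (z + w) ^+ 2).
Proof.
move=> _ _ _ L_gt0 lipschitz m_gt0 Rr_gt0 monotone x y w z g kappa c large.
have -> : (c * kappa * L)^-1 = m / L / (1000 * L).
  by rewrite /c /kappa; field; rewrite !gt_eqF.
have -> : (3 * (c * kappa) ^+ 2)^-1 = (m / L) ^+ 2 / (3 * 1000 ^+ 2).
  by rewrite /c /kappa; field; rewrite !gt_eqF.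
have -> : dotv z w + dotv (z + w) (- w - m / L / (1000 * L) *: g)
    = - norm2 w ^+ 2 - m / L / (1000 * L) * dotv (z + w) g.
  by rewrite dotvDr !dotvNr dotvZr (dotvDl z w w) -norm2_sqr; ring.
have lipschitz_z : norm2 g <= L * norm2 z := lipschitz x y.
have [far|near] := ltP Rr (norm2 z).
- have monotone_z := monotone x y far.
  have m_le_L := le_monotone_lipschitz monotone_z lipschitz_z (lt_trans Rr_gt0 far).
  exact (far_range_bound w m_gt0 m_le_L monotone_z lipschitz_z).
- have far_zw : Rr < norm2 (z + w).
    rewrite ltNge; apply/negP => zw_le.
    have := norm2_ge0 z; have := norm2_ge0 (z + w); nra.
  have m_le_L : m <= L.
    have := monotone (z + w + y) y; rewrite addrK => /(_ far_zw) monotone_zw.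
    have := lipschitz (z + w + y) y; rewrite addrK => lipschitz_zw.
    exact: le_monotone_lipschitz monotone_zw lipschitz_zw (lt_trans Rr_gt0 far_zw).
  exact (near_range_bound m_gt0 m_le_L near lipschitz_z large).
Qed.
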